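(* Let $R$ be a commutative domain with unit, let $f\in R$ be nonzero and non-invertible, and let $S=R[u,v]/(uv-f)$, with $R$ regarded as a subring of $S$. Let $a\in R$. Then: (i) if $a$ is irreducible in $S$, then $a$ is irreducible in $R$; (ii) if $a$ is irreducible in $R$ and not associated with $f$ in $R$, then $a$ is irreducible in $S$. *)

From HB Require Import structures.
From mathcomp Require Import all_boot all_order all_algebra.
From mathcomp Require Import ring_quotient generic_quotient.
From mathcomp Require Import boolp.
Set Implicit Arguments. Unset Strict Implicit. Unset Printing Implicit Defensive.
Import GRing.Theory.
Local Open Scope ring_scope.
Local Open Scope quotient_scope.

Definition is_unit (T : comNzRingType) (x : T) : Prop := exists y, x * y = 1.

Definition irreducible_elt (T : comNzRingType) (x : T) : Prop :=
  [/\ x != 0, ~ is_unit x &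
      forall y z : T, x = y * z -> is_unit y \/ is_unit z].

Definition associated (T : comNzRingType) (a b : T) : Prop :=
  exists e, is_unit e /\ a = e * b.

Section UVQuotient.
Variables (R : idomainType) (f : R).

(* The bivariate polynomial ring R[u][v] := {poly {poly R}}:
   u is the inner variable, v the outer one. *)
Definition var_u : {poly {poly R}} := ('X : {poly R})%:P.
Definition var_v : {poly {poly R}} := 'X.

Definition uvf : {poly {poly R}} := var_u * var_v - f%:P%:P.

Definition uvf_ideal : {pred {poly {poly R}}} :=
  fun p => `[< exists g, p = g * uvf >].

Lemma uvf_size : size uvf = 2%N.
Proof.
rewrite /uvf /var_u /var_v -polyCN size_MXaddC.
by rewrite polyC_eq0 polyX_eq0 /= size_polyC polyX_eq0.
Qed.

Lemma uvf_ideal_closed : idealr_closed uvf_ideal.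
Proof.
split.
- by apply/asboolP; exists 0; rewrite mul0r.
- apply/negP => /asboolP [g Hg].
  have : size (1 : {poly {poly R}}) = size (g * uvf) by rewrite -Hg.
  rewrite size_poly1.
  have [->|g0] := eqVneq g 0; first by rewrite mul0r size_poly0.
  have u0 : uvf != 0 by rewrite -size_poly_eq0 uvf_size.
  rewrite size_mul // uvf_size addn2 /=.
  by move: g0; rewrite -size_poly_eq0; case: (size g).
- move=> a u v /asboolP [g Hg] /asboolP [h Hh]; apply/asboolP.
  by exists (a * g + h); rewrite Hg Hh mulrDl mulrA.
Qed.

HB.instance Definition _ := isIdealr.Build {poly {poly R}} uvf_ideal
  uvf_ideal_closed.

Definition S_uv := {ideal_quot uvf_ideal}.

Definition iota_S (r : R) : S_uv := \pi_S_uv (r%:P%:P).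

End UVQuotient.

From HB Require Import structures.
From mathcomp Require Import all_boot all_order all_algebra.
From mathcomp Require Import ring_quotient generic_quotient fraction boolp ring.
Set Implicit Arguments. Unset Strict Implicit. Unset Printing Implicit Defensive.
Import GRing.Theory.
Local Open Scope ring_scope.
Local Open Scope quotient_scope.

(* The evaluation u := f, v := 1 is a ring retraction S -> R, so an element
   of R that is a unit in S is already a unit in R; this gives (i).
   For (ii), u := u, v := f/u embeds S into the fraction field of R[u]
   (u is a non-zero-divisor modulo uv - f because f != 0).  If a = y z in S,
   clearing powers of u turns this into a factorization of the monomial
   a u^k in R[u], so y and z map to Laurent monomials c u^i and d u^-i with
   a = c d.  If i = 0 then y and z lie in R, and irreducibility in R applies;
   if i > 0 then y = c u^i in S, and retracting gives a = c f^i r, so f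
   divides a and a is associated with f (symmetrically if i < 0). *)

Lemma associated_of_irreducible (T : comNzRingType) (a b f : T) :
  irreducible_elt a -> ~ is_unit f -> a = b * f -> associated a f.
Proof. by case=> _ _ airr nuf abf; case: (airr _ _ abf) => // ub; exists b. Qed.

Lemma rmorph_is_unit (T U : comNzRingType) (g : {rmorphism T -> U}) x :
  is_unit x -> is_unit (g x).
Proof. by case=> y xy; exists (g y); rewrite -rmorphM xy rmorph1. Qed.

Section Retraction.
Variables (T U : comNzRingType) (g : {rmorphism T -> U}) (h : U -> T).
Hypotheses (hM : {morph h : x y / x * y}) (h1 : h 1 = 1) (gK : cancel g h).

Lemma is_unit_retract x : is_unit (g x) -> is_unit x.
Proof. by case=> y xy; exists (h y); rewrite -[x]gK -hM xy h1. Qed.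

Lemma irreducible_retract a : irreducible_elt (g a) -> irreducible_elt a.
Proof.
case=> ga0 nuga gairr; split.
- by apply: contraNneq ga0 => ->; rewrite rmorph0.
- by move/(rmorph_is_unit g).
- move=> y z ayz; have := gairr (g y) (g z); rewrite -rmorphM -ayz.
  by case/(_ erefl) => /is_unit_retract; [left | right].
Qed.

End Retraction.

Section QuotientLift.
Variables (T : comNzRingType) (I : idealr T) (U : nzRingType).
Variable g : {rmorphism T -> U}.
Hypothesis gI : {in I, forall x, g x = 0}.

Definition quot_lift (y : {ideal_quot I}) : U := g (repr y).

Lemma quot_lift_pi x : quot_lift (\pi x) = g x.
Proof.
apply/eqP; rewrite -subr_eq0 -rmorphB gI //.
by rewrite Quotient.idealrBE reprK.
Qed.

Lemma quot_liftM : {morph quot_lift : x y / x * y}.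
Proof.
by move=> x y; rewrite -[x]reprK -[y]reprK -rmorphM !quot_lift_pi rmorphM.
Qed.

Lemma quot_lift_inj : (forall x, g x = 0 -> x \in I) -> injective quot_lift.
Proof.
move=> kerI y z; rewrite -[y]reprK -[z]reprK !quot_lift_pi => gyz.
by apply/eqP; rewrite -Quotient.idealrBE kerI // rmorphB gyz subrr.
Qed.

End QuotientLift.

Lemma drop_poly1_mulX (R : nzRingType) (p : {poly R}) :
  p`_0 = 0 -> drop_poly 1 p * 'X = p.
Proof.
by move=> p0; apply/polyP => -[|i]; rewrite coefMX ?coef_drop_poly ?addn1.
Qed.

Lemma monomial_factors (R : idomainType) (a : R) k (p q : {poly R}) :
  a != 0 -> p * q = a%:P * 'X^k ->
  exists c d i j,
    [/\ p = c%:P * 'X^i, q = d%:P * 'X^j, (i + j)%N = k & a = c * d].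
Proof.
move=> a0; elim: k p q => [|k IHk] p q pqa.
  have /andP[/eqP p1 /eqP q1] : (size p == 1) && (size q == 1).
    by rewrite -size_mul_eq1 pqa expr0 mulr1 size_polyC a0.
  have Cp : p = (p`_0)%:P by apply: size1_polyC; rewrite p1.
  have Cq : q = (q`_0)%:P by apply: size1_polyC; rewrite q1.
  exists p`_0, q`_0, 0%N, 0%N; rewrite !expr0 !mulr1; split=> //.
  by apply: polyC_inj; rewrite polyCM -Cp -Cq pqa expr0 mulr1.
have XI : GRing.rreg ('X : {poly R}) by apply/mulIf; rewrite polyX_eq0.
have /eqP := coef0M p q; rewrite pqa coefCM coefXn mulr0 eq_sym mulf_eq0.
case/orP => /eqP/drop_poly1_mulX pX.
- have [|c [d [i [j [dp -> <- ->]]]]] := IHk (drop_poly 1 p) q.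
    by apply: XI; rewrite /= mulrAC pX pqa exprSr mulrA.
  by exists c, d, i.+1, j; rewrite -pX dp exprSr mulrA.
- have [|c [d [i [j [-> dq <- ->]]]]] := IHk p (drop_poly 1 q).
    by apply: XI; rewrite /= -mulrA pX pqa exprSr mulrA.
  by exists c, d, i, j.+1; rewrite -pX dq exprSr mulrA addnS.
Qed.

Section UVQuotientTheory.
Variables (R : idomainType) (f : R).
Local Notation P2 := {poly {poly R}}.
Local Notation S := (S_uv f).
Local Notation I := (uvf_ideal f).
Local Notation u := (var_u R).
Local Notation v := (var_v R).
Local Notation "x %:F" := (@FracField.tofrac _ x).

HB.instance Definition _ :=
  GRing.RMorphism.copy (iota_S f) (\pi_S \o polyC \o polyC).

Lemma uvf_idealP p : p \in I <-> exists g, p = g * uvf f.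
Proof. by split=> /asboolP. Qed.

Lemma rmorph_uvf_ideal (T : nzRingType) (g : {rmorphism P2 -> T}) :
  g u * g v = g f%:P%:P -> {in I, forall p, g p = 0}.
Proof.
move=> guv p /uvf_idealP[h ->].
by rewrite rmorphM /uvf rmorphB rmorphM guv subrr mulr0.
Qed.

(* (u, v) := (f, 1) *)
Definition eval_f1 : {rmorphism P2 -> R} :=
  horner_morph (fun p : {poly R} => mulrC 1 (horner_eval f p)).

Lemma eval_f1C c : eval_f1 c%:P%:P = c.
Proof. by rewrite /eval_f1 /= horner_morphC; exact: hornerC. Qed.

Lemma eval_f1u : eval_f1 u = f.
Proof. by rewrite /eval_f1 /= horner_morphC; exact: hornerX. Qed.

Lemma eval_f1_uvf_ideal : {in I, forall p, eval_f1 p = 0}.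
Proof.
apply: rmorph_uvf_ideal.
by rewrite eval_f1C eval_f1u /eval_f1 /= horner_morphX mulr1.
Qed.

Definition f_over_u : {fraction {poly R}} := ('X%:F)^-1 * (f%:P)%:F.

(* (u, v) := (u, f/u) *)
Definition eval_frac : {rmorphism P2 -> {fraction {poly R}}} :=
  horner_morph (fun p : {poly R} => mulrC f_over_u p%:F).

Lemma eval_fracC c : eval_frac c%:P = c%:F.
Proof. exact: horner_morphC. Qed.

Lemma eval_fracX : eval_frac 'X = f_over_u.
Proof. exact: horner_morphX. Qed.

Lemma tofracX_neq0 : 'X%:F != 0 :> {fraction {poly R}}.
Proof. by rewrite tofrac_eq0 polyX_eq0. Qed.

Lemma f_over_u_mulX : f_over_u * 'X%:F = (f%:P)%:F.
Proof. by rewrite /f_over_u mulrC mulVKf ?tofracX_neq0. Qed.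

Lemma eval_frac_uvf_ideal : {in I, forall p, eval_frac p = 0}.
Proof.
apply: rmorph_uvf_ideal.
by rewrite eval_fracX !eval_fracC mulrC f_over_u_mulX.
Qed.

Lemma eval_frac_denominator p :
  exists N (q : {poly R}), eval_frac p * ('X^N)%:F = q%:F.
Proof.
elim/poly_ind: p => [|p c [N [q pq]]].
  by exists 0%N, 0; rewrite !rmorph0 mul0r.
exists N.+1, (q * f%:P + c * 'X^(N.+1)).
rewrite rmorphD rmorphM eval_fracX eval_fracC exprSr !(tofracD, tofracM).
by rewrite -pq -f_over_u_mulX; ring.
Qed.

Hypothesis f_neq0 : f != 0.

Lemma lead_coef_uvf : lead_coef (uvf f) = 'X.
Proof.
rewrite /lead_coef uvf_size /uvf /var_u /var_v coefB coefCM coefX coefC /=.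
by rewrite mulr1 subr0.
Qed.

(* Comparing constant terms in u of f G = u (G v - W) shows that u divides G. *)
Lemma uvf_ideal_cancelu W : u * W \in I -> W \in I.
Proof.
case/uvf_idealP=> G uWG.
have G0 n : (G`_n)`_0 = 0.
  have : f%:P%:P * G = u * (G * v - W) by rewrite mulrBr uWG /uvf; ring.
  move/(congr1 (fun p : P2 => (p`_n)`_0)); rewrite /= /var_u !coefCM coefXM /=.
  by move/eqP; rewrite mulf_eq0 (negPf f_neq0) => /eqP.
have GuG : G = u * map_poly (drop_poly 1) G.
  apply/polyP => n; rewrite /var_u coefCM coef_map_id0 ?drop_poly0r //.
  by rewrite mulrC drop_poly1_mulX.
apply/uvf_idealP; exists (map_poly (drop_poly 1) G).
have u_neq0 : u != 0 by rewrite polyC_eq0 polyX_eq0.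
by apply: (mulfI u_neq0); rewrite uWG {1}GuG mulrA.
Qed.

Lemma uvf_ideal_canceluX k W : u ^+ k * W \in I -> W \in I.
Proof.
elim: k W => [|k IHk] W; first by rewrite expr0 mul1r.
by rewrite exprS -mulrA => /uvf_ideal_cancelu/IHk.
Qed.

(* Pseudo-division by uv - f, whose leading coefficient in v is u, leaves a
   remainder in R[u], on which eval_frac is the injective map into fractions. *)
Lemma eval_frac_kernel p : eval_frac p = 0 -> p \in I.
Proof.
move=> p0; have uvf_neq0 : uvf f != 0 by rewrite -size_poly_eq0 uvf_size.
have : (size (p %% uvf f)%R <= 1)%N.
  by rewrite -ltnS -(uvf_size f) Pdiv.Idomain.ltn_modp.
move/size1_polyC; set r := _`_0 => pr.
have := Pdiv.Idomain.divp_eq p (uvf f); rewrite lead_coef_uvf pr.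
set k := Pdiv.Idomain.scalp _ _; set g := _ %/ _ => E.
have uvf_in : uvf f \in I by apply/uvf_idealP; exists 1; rewrite mul1r.
have r0 : r = 0.
  have := congr1 eval_frac E; rewrite -mul_polyC rmorphD !rmorphM p0 mulr0.
  rewrite (eval_frac_uvf_ideal uvf_in) mulr0 add0r eval_fracC.
  by move/esym/eqP; rewrite tofrac_eq0 => /eqP.
apply: (@uvf_ideal_canceluX k); rewrite /var_u -polyC_exp mul_polyC E r0 addr0.
by apply/uvf_idealP; exists g.
Qed.

Definition retractS : S -> R := quot_lift eval_f1.
Definition embedS : S -> {fraction {poly R}} := quot_lift eval_frac.

Lemma retractS_pi p : retractS (\pi p) = eval_f1 p.
Proof. exact: quot_lift_pi eval_f1_uvf_ideal p. Qed.

Lemma retractSM : {morph retractS : x y / x * y}.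
Proof. exact: quot_liftM eval_f1_uvf_ideal. Qed.

Lemma retractS1 : retractS 1 = 1.
Proof. by rewrite -(rmorph1 \pi_S) retractS_pi rmorph1. Qed.

Lemma retractS_iota c : retractS (iota_S f c) = c.
Proof. by rewrite retractS_pi eval_f1C. Qed.

Lemma embedS_pi p : embedS (\pi p) = eval_frac p.
Proof. exact: quot_lift_pi eval_frac_uvf_ideal p. Qed.

Lemma embedSM : {morph embedS : x y / x * y}.
Proof. exact: quot_liftM eval_frac_uvf_ideal. Qed.

Lemma embedS_inj : injective embedS.
Proof. exact: quot_lift_inj eval_frac_uvf_ideal eval_frac_kernel. Qed.

Lemma embedS_denominator y : exists N (q : {poly R}), embedS y * ('X^N)%:F = q%:F.
Proof. by rewrite -[y]reprK embedS_pi; exact: eval_frac_denominator. Qed.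

Lemma embedS_monomial y N c k :
  embedS y * ('X^N)%:F = (c%:P * 'X^(k + N))%:F -> y = \pi_S ((c%:P * 'X^k)%:P).
Proof.
move=> yN; apply: embedS_inj; rewrite embedS_pi eval_fracC.
have XN_neq0 : ('X^N)%:F != 0 :> {fraction {poly R}}.
  by rewrite rmorphXn expf_neq0 ?tofracX_neq0.
by apply: (mulIf XN_neq0); rewrite yN exprD mulrA rmorphM.
Qed.

Lemma f_dvd_retractS y N i c :
  embedS y * ('X^N)%:F = (c%:P * 'X^i)%:F -> (N < i)%N ->
  exists r, retractS y = r * f.
Proof.
move=> yN /subnK iN; rewrite -iN addnS -addSn in yN.
exists (c * f ^+ (i - N.+1)); rewrite (embedS_monomial yN) retractS_pi.
by rewrite polyCM rmorphM eval_f1C polyC_exp rmorphXn eval_f1u exprSr mulrA.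
Qed.

Lemma iota_of_embedS y N c :
  embedS y * ('X^N)%:F = (c%:P * 'X^N)%:F -> y = iota_S f c.
Proof. by rewrite -{2}[N]add0n => /embedS_monomial ->; rewrite expr0 mulr1. Qed.

Lemma iota_factor_cases a y z : a != 0 -> y * z = iota_S f a ->
  (exists c d, [/\ y = iota_S f c, z = iota_S f d & a = c * d]) \/
  exists r, a = r * f.
Proof.
move=> a_neq0 yza.
have [N [p yN]] := embedS_denominator y.
have [M [q zM]] := embedS_denominator z.
have : p * q = a%:P * 'X^(N + M).
  apply/eqP; rewrite -tofrac_eq !tofracM -yN -zM exprD tofracM.
  by rewrite mulrACA -embedSM yza embedS_pi eval_fracC.
case/(monomial_factors a_neq0) => c [d [i [j [pc qd ij acd]]]].
rewrite pc in yN; rewrite qd in zM.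
have a_retract : a = retractS y * retractS z.
  by rewrite -retractSM yza retractS_iota.
case: (ltngtP N i) => [Ni | iN | Ni].
- have [r ry] := f_dvd_retractS yN Ni.
  by right; exists (r * retractS z); rewrite a_retract ry mulrAC.
- have [|r rz] := f_dvd_retractS zM.
    by rewrite -(ltn_add2l N) -ij ltn_add2r.
  by right; exists (retractS y * r); rewrite a_retract rz mulrA.
- rewrite -Ni in yN ij.
  have jM : j = M by apply/eqP; rewrite -(eqn_add2l N) ij.
  rewrite jM in zM; left; exists c, d.
  by rewrite (iota_of_embedS yN) (iota_of_embedS zM).
Qed.

Lemma irreducible_of_iota a : irreducible_elt (iota_S f a) -> irreducible_elt a.
Proof. exact: (irreducible_retract retractSM retractS1 retractS_iota). Qed.

Lemma irreducible_iota a : ~ is_unit f ->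
  irreducible_elt a -> ~ associated a f -> irreducible_elt (iota_S f a).
Proof.
move=> nuf [a_neq0 nua airr] naf; split.
- apply: contra_neq a_neq0 => ia0.
  by apply: (can_inj retractS_iota); rewrite ia0 rmorph0.
- by move/(is_unit_retract retractSM retractS1 retractS_iota).
move=> y z /esym/(iota_factor_cases a_neq0) [[c [d [-> -> acd]]] | [r ar]].
- by case: (airr c d acd) => /(rmorph_is_unit (iota_S f)); [left | right].
- by case: naf; apply: associated_of_irreducible ar.
Qed.

End UVQuotientTheory.

Theorem lemma1p4 (R : idomainType) (f : R) (hf0 : f != 0) (hfu : ~ is_unit f)
  (a : R) :
  (irreducible_elt (iota_S f a) -> irreducible_elt a) /\
  (irreducible_elt a -> ~ associated a f -> irreducible_elt (iota_S f a)).
Proof.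
split; [exact: irreducible_of_iota | exact: irreducible_iota].
Qed.
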